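(* Along every trajectory of the Physarum dynamics, the potential difference $\Delta(t)=p_{s_0}(t)-p_{s_1}(t)$ converges to $L^*$, the length of a shortest $s_0$-$s_1$ path in $G$.
   Context: Let $G=(N,E)$ be a finite connected undirected graph with two distinct vertices $s_0$ (source) and $s_1$ (sink). Each edge $e$ has a fixed length $L_e>0$. Each edge has a time-dependent diameter $D_e(t)$ with $D_e(0)>0$, and resistance $R_e=L_e/D_e$. At each time $t$, the vertex potentials $p_v$ (normalized by $p_{s_1}=0$) are the solution of $\sum_{u\in\delta(v)}(p_v-p_u)/R_{uv}=b_v$ for all $v$, where $\delta(v)$ is the set of neighbours of $v$, $b_{s_0}=1$, $b_{s_1}=-1$, $b_v=0$ otherwise; for an edge $e=\{u,v\}$ with an arbitrarily fixed orientation $(u,v)$ the current is $Q_e=(p_u-p_v)/R_e=D_e(p_u-p_v)/L_e$. The diameters evolve by $\dot D_e(t)=|Q_e(t)|-D_e(t)$ for all $e\in E$ (the ''Physarum dynamics''). The length of a path is the sum of $L_e$ over its edges. *)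

From Stdlib Require Import Reals Lra List.
Import ListNotations.
Open Scope R_scope.

(* Graph encoding: vertices are 0..n-1; edges are 0..m-1; edge e joins
   vertices tl e and hd e (tl e is the arbitrarily fixed orientation). *)

Fixpoint rsum (m : nat) (f : nat -> R) : R :=
  match m with
  | O => 0
  | S k => rsum k f + f k
  end.

Inductive walk (m : nat) (tl hd : nat -> nat) : list nat -> list nat -> Prop :=
| walk_one v : walk m tl hd [v] []
| walk_step u v vs e es :
    (e < m)%nat ->
    ((tl e = u /\ hd e = v) \/ (tl e = v /\ hd e = u)) ->
    walk m tl hd (v :: vs) es ->
    walk m tl hd (u :: v :: vs) (e :: es).

Definition is_path (m : nat) (tl hd : nat -> nat) (s t : nat)
    (vs es : list nat) : Prop :=
  walk m tl hd vs es /\ NoDup vs /\ hd_error vs = Some s /\ last vs s = t.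

Definition path_length (L : nat -> R) (es : list nat) : R :=
  fold_right (fun e acc => L e + acc) 0 es.

Definition shortest_path_length (m : nat) (tl hd : nat -> nat) (L : nat -> R)
    (s t : nat) (Lstar : R) : Prop :=
  (exists vs es, is_path m tl hd s t vs es /\ path_length L es = Lstar) /\
  (forall vs es, is_path m tl hd s t vs es -> Lstar <= path_length L es).

Definition connected_simple_graph (n m : nat) (tl hd : nat -> nat)
    (s0 s1 : nat) : Prop :=
  (s0 < n)%nat /\ (s1 < n)%nat /\ s0 <> s1 /\
  (forall e, (e < m)%nat -> (tl e < n)%nat /\ (hd e < n)%nat /\ tl e <> hd e) /\
  (forall e e', (e < m)%nat -> (e' < m)%nat -> e <> e' ->
     ~ ((tl e = tl e' /\ hd e = hd e') \/ (tl e = hd e' /\ hd e = tl e'))) /\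
  (forall v, (v < n)%nat -> exists vs es, walk m tl hd vs es /\
       hd_error vs = Some s0 /\ last vs s0 = v).

Definition supply (s0 s1 v : nat) : R :=
  if Nat.eqb v s0 then 1 else if Nat.eqb v s1 then -1 else 0.

Definition net_outflow (m : nat) (tl hd : nat -> nat) (L D : nat -> R)
    (p : nat -> R) (v : nat) : R :=
  rsum m (fun e =>
    if Nat.eqb (tl e) v then (p v - p (hd e)) / (L e / D e)
    else if Nat.eqb (hd e) v then (p v - p (tl e)) / (L e / D e)
    else 0).

Definition current (tl hd : nat -> nat) (L D : nat -> R) (p : nat -> R)
    (e : nat) : R :=
  (p (tl e) - p (hd e)) / (L e / D e).

From Stdlib Require Import Reals List.
From Stdlib Require Import Lra Lia Classical.
Import ListNotations.
Open Scope R_scope.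

(* At each time the currents q(t) form a unit s0-s1 flow, the electrical flow
   for conductances D_e / L_e.  From this static picture we get: |q_e| <= 1;
   Thomson's principle; weak duality, i.e. the cost A = sum L_e |q_e| of any
   unit flow is at least Lstar (pair it with the shortest-path potential); and
   the quadratic inequality 0 <= Delta - 2 lam A + lam^2 W for the volume
   W = sum L_e D_e, obtained from the energy identity.

   Along the trajectory (D_e' = |q_e| - D_e) diameters stay positive and
   bounded, W' = A - W >= Lstar - W, and Delta grows at most like exp t.  For a
   shortest path P, Psi = sum_{e in P} L_e ln D_e - Lstar ln W is bounded and
   satisfies Psi' >= (Delta - Lstar^2 / W) / 2 >= 0; hence Psi converges, which
   forces Delta < Lstar + ep eventually.  Then the quadratic inequality at
   lam = 1 drives W below Lstar + 2 ep, and Delta >= Lstar^2 / W gives the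
   matching lower bound. *)

(** * Real-analysis tools *)

Lemma exp_le_mono x y : x <= y -> exp x <= exp y.
Proof. intros [H| ->]; [left; apply exp_increasing; exact H|lra]. Qed.

Lemma ln_le_mono x y : 0 < x -> x <= y -> ln x <= ln y.
Proof. intros Hx [H| ->]; [left; apply ln_increasing; auto|lra]. Qed.

Lemma derivable_pt_lim_ln_comp f x a : derivable_pt_lim f x a -> 0 < f x ->
  derivable_pt_lim (fun y => ln (f y)) x (/ f x * a).
Proof. intros H Hp. exact (derivable_pt_lim_comp f ln x a (/ f x) H (derivable_pt_lim_ln _ Hp)). Qed.

Lemma increment_ge_of_deriv_ge f f' k a b : a <= b ->
  (forall c, a <= c <= b -> derivable_pt_lim f c (f' c)) ->
  (forall c, a <= c <= b -> k <= f' c) -> k * (b - a) <= f b - f a.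
Proof.
  intros [Hab|Hab] Hd Hk; [|subst; lra].
  destruct (MVT_cor2 f f' a b Hab Hd) as [c [Hc1 Hc2]].
  rewrite Hc1. apply Rmult_le_compat_r; [lra|apply Hk; lra].
Qed.

Lemma nondecreasing_of_deriv_nonneg f f' a b : a <= b ->
  (forall c, a <= c <= b -> derivable_pt_lim f c (f' c)) ->
  (forall c, a <= c <= b -> 0 <= f' c) -> f a <= f b.
Proof.
  intros Hab Hd Hp. pose proof (increment_ge_of_deriv_ge f f' 0 a b Hab Hd Hp). lra.
Qed.

(* Comparison principle for the linear inequality f' <= k (B - f): the excess
   f - B decays at least like exp (- k t).  Proved by the monotonicity of
   - exp (k s) (f s - B). *)
Lemma linear_comparison_upper f f' k B a b : 0 < k -> a <= b ->
  (forall c, a <= c <= b -> derivable_pt_lim f c (f' c)) ->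
  (forall c, a <= c <= b -> f' c <= k * (B - f c)) ->
  f b - B <= exp (- (k * (b - a))) * (f a - B).
Proof.
  intros Hk Hab Hd Hi.
  set (g := fun s => - (exp (k * s) * (f s - B))).
  assert (Hg : g a <= g b).
  { apply (nondecreasing_of_deriv_nonneg g
      (fun s => - (exp (k * s) * (k * 1) * (f s - B) + exp (k * s) * (f' s - 0))));
      [exact Hab| |].
    - intros c Hc.
      apply (derivable_pt_lim_opp (fun s => exp (k * s) * (f s - B))).
      apply (derivable_pt_lim_mult (fun s => exp (k * s)) (fun s => f s - B)).
      + apply (derivable_pt_lim_comp (fun s => k * s) exp).
        * apply derivable_pt_lim_scal, derivable_pt_lim_id.
        * apply derivable_pt_lim_exp.
      + apply derivable_pt_lim_minus; [apply Hd; exact Hc|apply derivable_pt_lim_const].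
    - intros c Hc. specialize (Hi c Hc). pose proof (exp_pos (k * c)).
      assert (0 <= exp (k * c) * (- (k * (f c - B) + f' c))) by (apply Rmult_le_pos; lra).
      lra. }
  unfold g in Hg.
  assert (E : exp (k * b) * (f b - B) <= exp (k * a) * (f a - B)) by lra.
  pose proof (exp_pos (- (k * b))).
  apply Rmult_le_compat_l with (r := exp (- (k * b))) in E; [|lra].
  rewrite <- !Rmult_assoc, <- !exp_plus in E.
  replace (- (k * b) + k * b) with 0 in E by ring. rewrite exp_0 in E.
  replace (- (k * b) + k * a) with (- (k * (b - a))) in E by ring. lra.
Qed.

Lemma linear_comparison_lower f f' k B a b : 0 < k -> a <= b ->
  (forall c, a <= c <= b -> derivable_pt_lim f c (f' c)) ->
  (forall c, a <= c <= b -> k * (B - f c) <= f' c) ->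
  exp (- (k * (b - a))) * (f a - B) <= f b - B.
Proof.
  intros Hk Hab Hd Hi.
  assert (H : - f b - - B <= exp (- (k * (b - a))) * (- f a - - B)).
  { apply (linear_comparison_upper (fun s => - f s) (fun s => - f' s)); auto.
    - intros c Hc. apply derivable_pt_lim_opp, Hd, Hc.
    - intros c Hc. specialize (Hi c Hc). lra. }
  lra.
Qed.

Lemma exp_neg_eventually_le c : 0 < c -> exists T, forall t, T <= t -> exp (- t) <= c.
Proof.
  intros Hc. exists (- ln c). intros t Ht.
  rewrite <- (exp_ln c Hc). apply exp_le_mono. lra.
Qed.

Lemma bounded_nondecreasing_eventually_flat (g : R -> R) a C :
  (forall s t, a <= s -> s <= t -> g s <= g t) -> (forall t, a <= t -> g t <= C) ->
  forall eta, 0 < eta ->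
  exists T, a <= T /\ forall s t, T <= s -> s <= t -> g t - g s < eta.
Proof.
  intros Hm Hb eta Heta.
  set (E := fun y => exists t, a <= t /\ y = g t).
  assert (HE : bound E) by (exists C; intros y [t [Ht ->]]; auto).
  assert (HE2 : exists y, E y) by (exists (g a); exists a; split; [lra|auto]).
  destruct (completeness E HE HE2) as [S [Hub Hmin]].
  assert (Hnear : exists t, a <= t /\ S - eta < g t).
  { apply NNPP. intros Hno. assert (S <= S - eta); [|lra].
    apply Hmin. intros y [t [Ht ->]].
    apply Rnot_lt_le. intros Hlt. apply Hno. exists t. split; auto. }
  destruct Hnear as [T [HT HgT]]. exists T. split; auto.
  intros s t Hs Hst.
  assert (g t <= S) by (apply Hub; exists t; split; lra).
  assert (g T <= g s) by (apply Hm; lra). lra.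
Qed.

(** * Finite sums *)

Lemma rsum_ext m f g : (forall e, (e < m)%nat -> f e = g e) -> rsum m f = rsum m g.
Proof. induction m; simpl; intros H; auto. rewrite IHm, H; auto. Qed.

Lemma rsum_plus m f g : rsum m (fun e => f e + g e) = rsum m f + rsum m g.
Proof. induction m; simpl; [ring|rewrite IHm; ring]. Qed.

Lemma rsum_minus m f g : rsum m (fun e => f e - g e) = rsum m f - rsum m g.
Proof. induction m; simpl; [ring|rewrite IHm; ring]. Qed.

Lemma rsum_scal m c f : rsum m (fun e => c * f e) = c * rsum m f.
Proof. induction m; simpl; [ring|rewrite IHm; ring]. Qed.

Lemma rsum_zero m : rsum m (fun _ => 0) = 0.
Proof. induction m; simpl; [ring|rewrite IHm; ring]. Qed.

Lemma rsum_le m f g : (forall e, (e < m)%nat -> f e <= g e) -> rsum m f <= rsum m g.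
Proof.
  induction m; simpl; intros H; [lra|].
  assert (f m <= g m) by auto. assert (rsum m f <= rsum m g) by auto. lra.
Qed.

Lemma rsum_nonneg m f : (forall e, (e < m)%nat -> 0 <= f e) -> 0 <= rsum m f.
Proof. intros H. rewrite <- (rsum_zero m). apply rsum_le; auto. Qed.

Lemma rsum_term_le m f k : (forall e, (e < m)%nat -> 0 <= f e) -> (k < m)%nat ->
  f k <= rsum m f.
Proof.
  induction m; intros H Hk; [lia|]. simpl.
  destruct (Nat.eq_dec k m) as [->|Hkm].
  - assert (0 <= rsum m f) by (apply rsum_nonneg; auto). lra.
  - assert (f k <= rsum m f) by (apply IHm; auto; lia). assert (0 <= f m) by auto. lra.
Qed.

Lemma rsum_swap n m (F : nat -> nat -> R) :
  rsum n (fun v => rsum m (fun e => F v e)) = rsum m (fun e => rsum n (fun v => F v e)).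
Proof.
  induction n; simpl.
  - rewrite rsum_zero; auto.
  - rewrite IHn, <- rsum_plus. auto.
Qed.

Lemma rsum_indicator n w g : (w < n)%nat ->
  rsum n (fun v => if Nat.eqb w v then g v else 0) = g w.
Proof.
  induction n; intros Hw; [lia|]. simpl.
  destruct (Nat.eq_dec w n) as [->|Hwn].
  - rewrite Nat.eqb_refl, (rsum_ext n _ (fun _ => 0)), rsum_zero; [ring|].
    intros e He. destruct (Nat.eqb_spec n e); [lia|auto].
  - rewrite IHn by lia. destruct (Nat.eqb_spec w n); [lia|ring].
Qed.

Lemma rsum_deriv m (F : nat -> R -> R) (F' : nat -> R) t :
  (forall e, (e < m)%nat -> derivable_pt_lim (F e) t (F' e)) ->
  derivable_pt_lim (fun s => rsum m (fun e => F e s)) t (rsum m F').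
Proof.
  induction m; intros H; simpl.
  - apply derivable_pt_lim_const.
  - apply (derivable_pt_lim_plus (fun s => rsum m (fun e => F e s)) (F m)).
    + apply IHm. intros e He. apply H. lia.
    + apply H. lia.
Qed.

Lemma path_length_cons f e es : path_length f (e :: es) = f e + path_length f es.
Proof. reflexivity. Qed.

Lemma path_length_ext es f g : (forall e, In e es -> f e = g e) ->
  path_length f es = path_length g es.
Proof.
  induction es as [|e es IH]; intros H; [reflexivity|].
  rewrite !path_length_cons, IH, H; [reflexivity|left; reflexivity|].
  intros e' He'. apply H. right. exact He'.
Qed.

Lemma path_length_minus es f g :
  path_length (fun e => f e - g e) es = path_length f es - path_length g es.
Proof. induction es as [|e es IH]; rewrite ?path_length_cons, ?IH; simpl; ring. Qed.

Lemma path_length_le es f g : (forall e, In e es -> f e <= g e) ->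
  path_length f es <= path_length g es.
Proof.
  induction es as [|e es IH]; intros H; [unfold path_length; simpl; lra|].
  rewrite !path_length_cons.
  assert (f e <= g e) by (apply H; left; reflexivity).
  assert (path_length f es <= path_length g es) by (apply IH; intros; apply H; right; auto).
  lra.
Qed.

Lemma path_length_deriv (es : list nat) (F : nat -> R -> R) (F' : nat -> R) t :
  (forall e, In e es -> derivable_pt_lim (F e) t (F' e)) ->
  derivable_pt_lim (fun s => path_length (fun e => F e s) es) t (path_length F' es).
Proof.
  induction es as [|e es IH]; intros H.
  - apply derivable_pt_lim_const.
  - apply (derivable_pt_lim_plus (F e) (fun s => path_length (fun e => F e s) es)).
    + apply H. left. reflexivity.
    + apply IH. intros e' He'. apply H. right. exact He'.
Qed.

(** * Walks and the shortest-path potential *)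

Lemma walk_edges m tl hd vs es : walk m tl hd vs es -> forall e, In e es -> (e < m)%nat.
Proof. induction 1; simpl; intros e0 He0; [tauto|]. destruct He0; [subst; auto|auto]. Qed.

Lemma last_default (x : nat) l d1 d2 : last (x :: l) d1 = last (x :: l) d2.
Proof.
  revert x. induction l as [|y l IH]; intros x; [reflexivity|].
  change (last (y :: l) d1 = last (y :: l) d2). apply IH.
Qed.

Lemma walk_telescope m tl hd (phi : nat -> R) vs es : walk m tl hd vs es ->
  forall u d, hd_error vs = Some u ->
  Rabs (phi u - phi (last vs d)) <= path_length (fun e => Rabs (phi (tl e) - phi (hd e))) es.
Proof.
  induction 1 as [v|u v vs e es He Hends Hw IH]; intros u0 d Hh; simpl in Hh; inversion Hh; subst.
  - simpl. replace (phi u0 - phi u0) with 0 by ring. rewrite Rabs_R0. lra.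
  - specialize (IH v d eq_refl).
    change (last (u0 :: v :: vs) d) with (last (v :: vs) d).
    assert (E : Rabs (phi (tl e) - phi (hd e)) = Rabs (phi u0 - phi v)).
    { destruct Hends as [[-> ->]|[-> ->]]; auto. apply Rabs_minus_sym. }
    rewrite path_length_cons, E.
    pose proof (Rabs_triang (phi u0 - phi v) (phi v - phi (last (v :: vs) d))).
    replace (phi u0 - phi (last (v :: vs) d))
      with ((phi u0 - phi v) + (phi v - phi (last (v :: vs) d))) by ring.
    lra.
Qed.

Section PositiveLengths.

Variables (m : nat) (tl hd : nat -> nat) (L : nat -> R).
Hypothesis HL : forall e, (e < m)%nat -> 0 < L e.

Lemma walk_length_nonneg vs es : walk m tl hd vs es -> 0 <= path_length L es.
Proof.
  induction 1 as [v|u v vs e es He _ _ IH]; [unfold path_length; simpl; lra|].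
  rewrite path_length_cons. pose proof (HL e He). lra.
Qed.

Lemma walk_suffix vs es : walk m tl hd vs es ->
  forall u, In u vs -> exists vs2 es2, walk m tl hd vs2 es2 /\ hd_error vs2 = Some u /\
    (forall d, last vs2 d = last vs d) /\ (NoDup vs -> NoDup vs2) /\
    path_length L es2 <= path_length L es.
Proof.
  induction 1 as [v|u v vs e es He Hends Hw IH]; intros u0 Hin.
  - destruct Hin as [<-|[]]. exists [v], [].
    split; [constructor|]. split; [reflexivity|]. split; [reflexivity|]. split; [auto|lra].
  - destruct (Nat.eq_dec u0 u) as [->|Hne].
    + exists (u :: v :: vs), (e :: es). repeat split; auto; [constructor; auto|lra].
    + destruct Hin as [Heq|Hin]; [congruence|].
      destruct (IH u0 Hin) as (vs2 & es2 & Hw2 & Hh & Hl & Hn & Hle).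
      exists vs2, es2. repeat split; auto.
      * intros Hnd. apply Hn. inversion Hnd; auto.
      * rewrite path_length_cons. specialize (HL e He). lra.
Qed.

Lemma loop_erase vs es : walk m tl hd vs es ->
  exists vs' es', walk m tl hd vs' es' /\ NoDup vs' /\ hd_error vs' = hd_error vs /\
    (forall d, last vs' d = last vs d) /\ path_length L es' <= path_length L es.
Proof.
  induction 1 as [v|u v vs e es He Hends Hw IH].
  - exists [v], []. repeat split; [constructor|constructor; [simpl; tauto|constructor]|lra].
  - destruct IH as (vs' & es' & Hw' & Hnd & Hh & Hl & Hle).
    assert (HLe := HL e He).
    destruct (in_dec Nat.eq_dec u vs') as [Hin|Hnin].
    + destruct (walk_suffix vs' es' Hw' u Hin) as (vs2 & es2 & Hw2 & Hh2 & Hl2 & Hn2 & Hle2).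
      exists vs2, es2. repeat split; auto.
      * intros d. rewrite Hl2, Hl. reflexivity.
      * rewrite path_length_cons. lra.
    + destruct vs' as [|v' rest]; [inversion Hw'|]. simpl in Hh. inversion Hh; subst v'.
      exists (u :: v :: rest), (e :: es'). repeat split.
      * constructor; auto.
      * constructor; auto.
      * intros d. change (last (v :: rest) d = last (v :: vs) d). apply Hl.
      * rewrite !path_length_cons. lra.
Qed.

Variables (s0 s1 : nat) (Lstar : R).
Hypothesis HLstar : shortest_path_length m tl hd L s0 s1 Lstar.

Lemma shortest_length_pos : s0 <> s1 -> 0 < Lstar.
Proof.
  intros Hne. destruct HLstar as [[vs [es [[Hw [_ [Hh Hl]]] Hlen]]] _].
  rewrite <- Hlen.
  destruct Hw as [v|u v vs0 e es0 He Hends Hw'].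
  - simpl in Hh, Hl. inversion Hh. congruence.
  - rewrite path_length_cons. pose proof (HL e He). pose proof (walk_length_nonneg _ _ Hw'). lra.
Qed.

(* Dual certificate of shortest paths: a potential d that is 1-Lipschitz with
   respect to the edge lengths and separates s0 from s1 by at least Lstar.
   d v is minus the infimum of the lengths of walks from v to s1 (capped). *)
Lemma shortest_path_potential : 0 <= Lstar ->
  exists d : nat -> R, d s1 <= 0 /\ Lstar <= d s0 /\
    forall e, (e < m)%nat -> Rabs (d (tl e) - d (hd e)) <= L e.
Proof.
  intros HLs.
  set (E := fun v y => y = - Lstar \/ exists vs es, walk m tl hd vs es /\
     hd_error vs = Some v /\ last vs v = s1 /\ y = - path_length L es).
  assert (Hb : forall v, bound (E v)).
  { intros v. exists 0. intros y [->|(vs & es & Hw & _ & _ & ->)]; [lra|].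
    pose proof (walk_length_nonneg _ _ Hw). lra. }
  assert (Hn : forall v, exists y, E v y) by (intros v; exists (- Lstar); left; auto).
  set (lub := fun v => proj1_sig (completeness (E v) (Hb v) (Hn v))).
  assert (Hlub : forall v, is_lub (E v) (lub v)).
  { intros v. unfold lub. destruct (completeness (E v) (Hb v) (Hn v)); auto. }
  assert (Hedge : forall e u v, (e < m)%nat ->
            ((tl e = u /\ hd e = v) \/ (tl e = v /\ hd e = u)) -> lub v <= L e + lub u).
  { intros e u v He Hends. destruct (Hlub v) as [_ Hmin]. apply Hmin.
    destruct (Hlub u) as [Hub _].
    intros y [->|(vs & es & Hw & Hh & Hl & ->)].
    - assert (- Lstar <= lub u) by (apply Hub; left; auto). pose proof (HL e He). lra.
    - destruct vs as [|v' vs0]; [inversion Hw|]. simpl in Hh. inversion Hh; subst v'.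
      assert (Hu : - path_length L (e :: es) <= lub u).
      { apply Hub. right. exists (u :: v :: vs0), (e :: es). repeat split; [constructor; auto|].
        change (last (v :: vs0) u = s1). rewrite (last_default v vs0 u v). auto. }
      rewrite path_length_cons in Hu. lra. }
  exists (fun v => - lub v). repeat split.
  - destruct (Hlub s1) as [Hub _].
    assert (- path_length L [] <= lub s1).
    { apply Hub. right. exists [s1], []. repeat split. constructor. }
    unfold path_length in *. simpl in *. lra.
  - destruct (Hlub s0) as [_ Hmin]. assert (lub s0 <= - Lstar); [|lra].
    apply Hmin. intros y [->|(vs & es & Hw & Hh & Hl & ->)]; [lra|].
    destruct (loop_erase _ _ Hw) as (vs' & es' & Hw' & Hnd & Hh' & Hl' & Hle).
    assert (Lstar <= path_length L es').
    { apply (proj2 HLstar vs' es'). repeat split; auto; [congruence|]. rewrite Hl'. auto. }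
    lra.
  - intros e He. apply Rabs_le. split.
    + assert (lub (tl e) <= L e + lub (hd e)) by (apply (Hedge e (hd e) (tl e) He); right; auto).
      lra.
    + assert (lub (hd e) <= L e + lub (tl e)) by (apply (Hedge e (tl e) (hd e) He); left; auto).
      lra.
Qed.

End PositiveLengths.

(** * Unit s0-s1 flows and electrical flows *)

Definition is_unit_flow n m (tl hd : nat -> nat) s0 s1 (f : nat -> R) : Prop :=
  forall v, (v < n)%nat -> rsum m (fun e => (if Nat.eqb (tl e) v then f e else 0)
     - (if Nat.eqb (hd e) v then f e else 0)) = supply s0 s1 v.

Lemma kirchhoff_unit_flow n m tl hd s0 s1 L x pt :
  (forall e, (e < m)%nat -> tl e <> hd e) ->
  (forall v, (v < n)%nat -> net_outflow m tl hd L x pt v = supply s0 s1 v) ->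
  is_unit_flow n m tl hd s0 s1 (current tl hd L x pt).
Proof.
  intros Hne Hk v Hv. rewrite <- (Hk v Hv). unfold net_outflow, current.
  apply rsum_ext. intros e He.
  destruct (Nat.eqb_spec (tl e) v), (Nat.eqb_spec (hd e) v).
  - exfalso. apply (Hne e He). congruence.
  - subst. ring.
  - subst. unfold Rdiv. ring.
  - ring.
Qed.

Lemma current_eq tl hd (L x pt : nat -> R) e : 0 < L e -> 0 < x e ->
  current tl hd L x pt e = (pt (tl e) - pt (hd e)) * (x e / L e).
Proof. intros. unfold current. field. lra. Qed.

Section UnitFlows.

Variables (n m : nat) (tl hd : nat -> nat) (s0 s1 : nat).
Hypotheses (Hs0 : (s0 < n)%nat) (Hs1 : (s1 < n)%nat) (Hs01 : s0 <> s1).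
Hypothesis Hends : forall e, (e < m)%nat -> (tl e < n)%nat /\ (hd e < n)%nat.

(* Summation by parts: pairing a unit flow with the drops of any potential phi
   gives phi s0 - phi s1. *)
Lemma unit_flow_pairing f phi : is_unit_flow n m tl hd s0 s1 f ->
  rsum m (fun e => f e * (phi (tl e) - phi (hd e))) = phi s0 - phi s1.
Proof.
  intros Hf.
  transitivity (rsum n (fun v => phi v * supply s0 s1 v)).
  - transitivity (rsum m (fun e => rsum n (fun v => phi v *
        ((if Nat.eqb (tl e) v then f e else 0) - (if Nat.eqb (hd e) v then f e else 0))))).
    + apply rsum_ext. intros e He. destruct (Hends e He) as [Ht Hh].
      rewrite (rsum_ext n _ (fun v => (if Nat.eqb (tl e) v then phi v * f e else 0) -
          (if Nat.eqb (hd e) v then phi v * f e else 0))).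
      2:{ intros v _. destruct (Nat.eqb (tl e) v), (Nat.eqb (hd e) v); ring. }
      rewrite rsum_minus, !rsum_indicator by auto. ring.
    + rewrite <- rsum_swap. apply rsum_ext. intros v Hv.
      rewrite rsum_scal, Hf; auto.
  - rewrite (rsum_ext n _ (fun v => (if Nat.eqb s0 v then phi v else 0)
                                   - (if Nat.eqb s1 v then phi v else 0))).
    + rewrite rsum_minus, !rsum_indicator by auto. ring.
    + intros v _. unfold supply.
      destruct (Nat.eqb_spec v s0), (Nat.eqb_spec s0 v), (Nat.eqb_spec v s1),
        (Nat.eqb_spec s1 v); subst; try lia; ring.
Qed.

(* Weak duality: every unit flow costs at least the shortest-path length,
   by pairing it with the shortest-path potential. *)
Lemma unit_flow_cost_ge (L : nat -> R) Lstar f :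
  (forall e, (e < m)%nat -> 0 < L e) ->
  shortest_path_length m tl hd L s0 s1 Lstar ->
  is_unit_flow n m tl hd s0 s1 f -> Lstar <= rsum m (fun e => L e * Rabs (f e)).
Proof.
  intros HL Hsp Hf.
  assert (HLs : 0 < Lstar) by (apply (shortest_length_pos m tl hd L HL s0 s1); auto).
  destruct (shortest_path_potential m tl hd L HL s0 s1 Lstar Hsp ltac:(lra))
    as (d & Hd1 & Hd0 & Hde).
  pose proof (unit_flow_pairing f d Hf) as Hs.
  assert (rsum m (fun e => f e * (d (tl e) - d (hd e))) <= rsum m (fun e => L e * Rabs (f e))).
  { apply rsum_le. intros e He. specialize (Hde e He).
    eapply Rle_trans; [apply RRle_abs|]. rewrite Rabs_mult, Rmult_comm.
    apply Rmult_le_compat_r; [apply Rabs_pos|auto]. }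
  lra.
Qed.

Variables (L x pt : nat -> R).
Hypotheses (HL : forall e, (e < m)%nat -> 0 < L e) (Hx : forall e, (e < m)%nat -> 0 < x e).
Let q := current tl hd L x pt.
Hypothesis Hq : is_unit_flow n m tl hd s0 s1 q.

Lemma electrical_energy : pt s0 - pt s1 = rsum m (fun e => L e * q e ^ 2 / x e).
Proof.
  rewrite <- (unit_flow_pairing q pt Hq).
  apply rsum_ext. intros e He. unfold q. rewrite current_eq by auto.
  specialize (HL e He). specialize (Hx e He). field. lra.
Qed.

(* No edge carries more than the unit current: pair the flow with the
   indicator of the potential level set above the edge. *)
Lemma electrical_current_le_1 e0 : (e0 < m)%nat -> Rabs (q e0) <= 1.
Proof.
  intros He0.
  set (c := Rmax (pt (tl e0)) (pt (hd e0))).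
  set (phi := fun w => if Rle_dec c (pt w) then 1 else 0).
  assert (Hpos : forall e, (e < m)%nat -> 0 <= q e * (phi (tl e) - phi (hd e))).
  { intros e He. unfold q. rewrite current_eq by auto.
    assert (0 < x e / L e) by (apply Rdiv_lt_0_compat; auto).
    unfold phi. destruct (Rle_dec c (pt (tl e))), (Rle_dec c (pt (hd e))).
    - lra.
    - apply Rmult_le_pos; [apply Rmult_le_pos|]; lra.
    - replace ((pt (tl e) - pt (hd e)) * (x e / L e) * (0 - 1))
        with ((pt (hd e) - pt (tl e)) * (x e / L e)) by ring.
      apply Rmult_le_pos; lra.
    - lra. }
  assert (Hsum : rsum m (fun e => q e * (phi (tl e) - phi (hd e))) <= 1).
  { rewrite (unit_flow_pairing q phi Hq). unfold phi.
    destruct (Rle_dec c (pt s0)), (Rle_dec c (pt s1)); lra. }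
  pose proof (rsum_term_le m _ e0 Hpos He0).
  assert (Rabs (q e0) <= q e0 * (phi (tl e0) - phi (hd e0))); [|lra].
  unfold q. rewrite current_eq by auto.
  assert (Hk : 0 < x e0 / L e0) by (apply Rdiv_lt_0_compat; auto).
  unfold phi, c, Rmax.
  destruct (Rle_dec (pt (tl e0)) (pt (hd e0))) as [Hle|Hle].
  - destruct (Rle_dec (pt (hd e0)) (pt (hd e0))) as [_|]; [|lra].
    destruct (Rle_dec (pt (hd e0)) (pt (tl e0))).
    + replace (pt (tl e0) - pt (hd e0)) with 0 by lra. rewrite Rmult_0_l, Rabs_R0. lra.
    + rewrite Rabs_left1; [lra|].
      assert (0 <= (pt (hd e0) - pt (tl e0)) * (x e0 / L e0)) by (apply Rmult_le_pos; lra).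
      lra.
  - destruct (Rle_dec (pt (tl e0)) (pt (tl e0))) as [_|]; [|lra].
    destruct (Rle_dec (pt (tl e0)) (pt (hd e0))); [lra|].
    rewrite Rabs_pos_eq; [lra|]. apply Rmult_le_pos; lra.
Qed.

Lemma thomson_principle f : is_unit_flow n m tl hd s0 s1 f ->
  pt s0 - pt s1 <= rsum m (fun e => L e * f e ^ 2 / x e).
Proof.
  intros Hf.
  pose proof (unit_flow_pairing f pt Hf) as Ef.
  pose proof (unit_flow_pairing q pt Hq) as Eq.
  assert (rsum m (fun e => 2 * (f e * (pt (tl e) - pt (hd e))) - q e * (pt (tl e) - pt (hd e)))
          <= rsum m (fun e => L e * f e ^ 2 / x e)).
  { apply rsum_le. intros e He. unfold q. rewrite current_eq by auto.
    specialize (HL e He). specialize (Hx e He).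
    set (dl := pt (tl e) - pt (hd e)).
    assert (E : L e * f e ^ 2 / x e - (2 * (f e * dl) - dl * (x e / L e) * dl) =
      (L e * f e - x e * dl) ^ 2 * / (L e * x e)) by (field; lra).
    assert (0 <= (L e * f e - x e * dl) ^ 2 * / (L e * x e)).
    { apply Rmult_le_pos; [apply pow2_ge_0|]. left. apply Rinv_0_lt_compat. nra. }
    lra. }
  rewrite rsum_minus, rsum_scal, Ef, Eq in H. lra.
Qed.

(* The key quadratic inequality: for every lam,
   0 <= Delta - 2 lam (cost of q) + lam^2 (volume), since it is a sum of the
   squares L_e (|q_e| - lam x_e)^2 / x_e by the energy identity. *)
Lemma electrical_quadratic_ineq lam :
  0 <= (pt s0 - pt s1) - 2 * lam * rsum m (fun e => L e * Rabs (q e))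
       + lam ^ 2 * rsum m (fun e => L e * x e).
Proof.
  rewrite electrical_energy, <- !rsum_scal, <- rsum_minus, <- rsum_plus.
  apply rsum_nonneg. intros e He. specialize (HL e He). specialize (Hx e He).
  replace (L e * q e ^ 2 / x e - 2 * lam * (L e * Rabs (q e)) + lam ^ 2 * (L e * x e))
    with (L e * (Rabs (q e) - lam * x e) ^ 2 / x e).
  - apply Rmult_le_pos; [|left; apply Rinv_0_lt_compat; auto].
    apply Rmult_le_pos; [lra|apply pow2_ge_0].
  - rewrite <- (pow2_abs (q e)). field. lra.
Qed.

End UnitFlows.

(** * A trajectory of the Physarum dynamics *)

Section PhysarumTrajectory.

Variables (n m : nat) (tl hd : nat -> nat) (s0 s1 : nat) (L : nat -> R).
Variables (D : nat -> R -> R) (p : nat -> R -> R).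
Hypotheses (Hs0 : (s0 < n)%nat) (Hs1 : (s1 < n)%nat) (Hs01 : s0 <> s1).
Hypothesis Hends : forall e, (e < m)%nat -> (tl e < n)%nat /\ (hd e < n)%nat.
Hypothesis Hloopless : forall e, (e < m)%nat -> tl e <> hd e.
Hypothesis HL : forall e, (e < m)%nat -> 0 < L e.
Hypothesis HD0 : forall e, (e < m)%nat -> 0 < D e 0.
Hypothesis Hkirch : forall t, 0 <= t -> forall v, (v < n)%nat ->
  net_outflow m tl hd L (fun e => D e t) (fun u => p u t) v = supply s0 s1 v.
Hypothesis Hcont0 : forall e, (e < m)%nat -> forall eps, 0 < eps ->
  exists delta, 0 < delta /\ forall t, 0 <= t < delta -> Rabs (D e t - D e 0) < eps.
Hypothesis Hode : forall e, (e < m)%nat -> forall t, 0 < t ->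
  derivable_pt_lim (D e) t
    (Rabs (current tl hd L (fun e' => D e' t) (fun u => p u t) e) - D e t).
Variable Lstar : R.
Hypothesis HLstar : shortest_path_length m tl hd L s0 s1 Lstar.

Definition flow (e : nat) (t : R) : R :=
  current tl hd L (fun e' => D e' t) (fun u => p u t) e.
Definition gap (t : R) : R := p s0 t - p s1 t.
Definition cost (t : R) : R := rsum m (fun e => L e * Rabs (flow e t)).
Definition volume (t : R) : R := rsum m (fun e => L e * D e t).

Lemma Lstar_pos : 0 < Lstar.
Proof. exact (shortest_length_pos m tl hd L HL s0 s1 Lstar HLstar Hs01). Qed.

Lemma flow_unit t : 0 <= t -> is_unit_flow n m tl hd s0 s1 (fun e => flow e t).
Proof. intros Ht. apply kirchhoff_unit_flow; auto. Qed.

(* Since D_e' >= - D_e, a diameter decays at most exponentially. *)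
Lemma diameter_decay_bound e s t : (e < m)%nat -> 0 < s -> s <= t ->
  exp (- (t - s)) * D e s <= D e t.
Proof.
  intros He Hs Hst.
  assert (H : exp (- (1 * (t - s))) * (D e s - 0) <= D e t - 0).
  { apply (linear_comparison_lower (D e) (fun c => Rabs (flow e c) - D e c)); [lra|exact Hst| |].
    - intros c Hc. apply Hode; auto; lra.
    - intros c Hc. pose proof (Rabs_pos (flow e c)). lra. }
  replace (1 * (t - s)) with (t - s) in H by ring. lra.
Qed.

(* Diameters stay positive: they are positive near 0 by continuity, and decay
   at most exponentially afterwards. *)
Lemma diameter_pos e t : (e < m)%nat -> 0 < t -> 0 < D e t.
Proof.
  intros He Ht. pose proof (HD0 e He) as H0.
  destruct (Hcont0 e He (D e 0 / 2)) as [delta [Hdel Hd]]; [lra|].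
  set (t0 := Rmin t (delta / 2)).
  assert (Ht0 : 0 < t0) by (apply Rmin_glb_lt; lra).
  assert (t0 <= t) by apply Rmin_l.
  assert (t0 <= delta / 2) by apply Rmin_r.
  assert (0 < D e t0) by (specialize (Hd t0 ltac:(lra)); apply Rabs_def2 in Hd; lra).
  pose proof (diameter_decay_bound e t0 t He Ht0 ltac:(lra)).
  pose proof (exp_pos (- (t - t0))).
  assert (0 < exp (- (t - t0)) * D e t0) by (apply Rmult_lt_0_compat; auto).
  lra.
Qed.

Lemma flow_le_1 e t : (e < m)%nat -> 0 < t -> Rabs (flow e t) <= 1.
Proof.
  intros He Ht.
  apply (electrical_current_le_1 n m tl hd s0 s1 Hs0 Hs1 Hs01 Hends L (fun e' => D e' t));
    auto.
  - intros e' He'. apply diameter_pos; auto.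
  - apply flow_unit. lra.
Qed.

(* Since D_e' <= 1 - D_e, diameters are eventually bounded. *)
Lemma diameter_bounded e t : (e < m)%nat -> 1 <= t -> D e t <= Rmax 1 (D e 1).
Proof.
  intros He Ht.
  assert (H : D e t - 1 <= exp (- (1 * (t - 1))) * (D e 1 - 1)).
  { apply (linear_comparison_upper (D e) (fun c => Rabs (flow e c) - D e c)); [lra|exact Ht| |].
    - intros c Hc. apply Hode; auto; lra.
    - intros c Hc. pose proof (flow_le_1 e c He ltac:(lra)). lra. }
  set (k := exp (- (1 * (t - 1)))) in H.
  assert (Hk0 : 0 < k) by apply exp_pos.
  assert (Hk1 : k <= exp 0) by (apply exp_le_mono; lra). rewrite exp_0 in Hk1.
  pose proof (Rmax_l 1 (D e 1)). pose proof (Rmax_r 1 (D e 1)).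
  destruct (Rle_dec (D e 1) 1).
  - assert (0 <= k * (1 - D e 1)) by (apply Rmult_le_pos; lra). lra.
  - assert (0 <= (1 - k) * (D e 1 - 1)) by (apply Rmult_le_pos; lra). lra.
Qed.

Lemma cost_ge_Lstar t : 0 < t -> Lstar <= cost t.
Proof.
  intros Ht. apply (unit_flow_cost_ge n m tl hd s0 s1 Hs0 Hs1 Hs01 Hends L Lstar); auto.
  apply flow_unit. lra.
Qed.

Lemma gap_quadratic t lam : 0 < t -> 0 <= gap t - 2 * lam * cost t + lam ^ 2 * volume t.
Proof.
  intros Ht. unfold gap, cost, volume, flow.
  apply (electrical_quadratic_ineq n m tl hd s0 s1 Hs0 Hs1 Hs01 Hends L (fun e' => D e' t)
           (fun u => p u t)); auto.
  - intros e' He'. apply diameter_pos; auto.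
  - apply flow_unit. lra.
Qed.

Lemma volume_deriv t : 0 < t -> derivable_pt_lim volume t (cost t - volume t).
Proof.
  intros Ht.
  replace (cost t - volume t) with (rsum m (fun e => L e * (Rabs (flow e t) - D e t))).
  - apply (rsum_deriv m (fun e s => L e * D e s)). intros e He.
    apply derivable_pt_lim_scal, Hode; auto.
  - unfold cost, volume. rewrite <- rsum_minus. apply rsum_ext. intros; ring.
Qed.

(* W' = A - W >= Lstar - W, so the volume approaches [Lstar, +oo) exponentially. *)
Lemma volume_lower t : 1 <= t -> Lstar - exp (- (t - 1)) * Lstar <= volume t.
Proof.
  intros Ht.
  assert (H : exp (- (1 * (t - 1))) * (volume 1 - Lstar) <= volume t - Lstar).
  { apply (linear_comparison_lower volume (fun c => cost c - volume c)); [lra|exact Ht| |].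
    - intros c Hc. apply volume_deriv. lra.
    - intros c Hc. pose proof (cost_ge_Lstar c ltac:(lra)). lra. }
  replace (1 * (t - 1)) with (t - 1) in H by ring.
  assert (0 <= volume 1).
  { apply rsum_nonneg. intros e He. pose proof (HL e He). pose proof (diameter_pos e 1 He).
    apply Rmult_le_pos; lra. }
  pose proof (exp_pos (- (t - 1))).
  assert (0 <= exp (- (t - 1)) * volume 1) by (apply Rmult_le_pos; lra). lra.
Qed.

(* In particular W(t) >= Lstar / 2 for t >= 2, which keeps ln W well defined. *)
Lemma volume_ge_half t : 2 <= t -> Lstar / 2 <= volume t.
Proof.
  intros Ht. pose proof (volume_lower t ltac:(lra)). pose proof Lstar_pos.
  assert (exp (- (t - 1)) <= exp (Ropp 1)) by (apply exp_le_mono; lra).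
  assert (exp (Ropp 1) < / 2).
  { rewrite exp_Ropp. apply Rinv_lt_contravar; [apply Rmult_lt_0_compat; [lra|apply exp_pos]|].
    pose proof (exp_ineq1 1 ltac:(lra)). lra. }
  assert (exp (- (t - 1)) * Lstar <= / 2 * Lstar) by (apply Rmult_le_compat_r; lra).
  lra.
Qed.

Lemma lstar_sq_over_volume_eventually delta : 0 < delta ->
  exists T, 2 <= T /\ forall t, T <= t -> Lstar ^ 2 / volume t <= Lstar + delta.
Proof.
  intros Hdel. pose proof Lstar_pos.
  set (r := delta / (Lstar + delta)).
  assert (Hr : 0 < r) by (apply Rdiv_lt_0_compat; lra).
  destruct (exp_neg_eventually_le r Hr) as [Ta Hta].
  exists (Rmax 2 (Ta + 1)). split; [apply Rmax_l|]. intros t Ht.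
  pose proof (Rmax_l 2 (Ta + 1)). pose proof (Rmax_r 2 (Ta + 1)).
  pose proof (volume_lower t ltac:(lra)). pose proof (volume_ge_half t ltac:(lra)).
  assert (exp (- (t - 1)) <= r) by (apply Hta; lra).
  assert (exp (- (t - 1)) * Lstar <= r * Lstar) by (apply Rmult_le_compat_r; lra).
  assert (Hlow : Lstar * (1 - r) <= volume t) by lra.
  assert (Hr1 : (Lstar + delta) * (1 - r) = Lstar) by (unfold r; field; lra).
  assert (E : Lstar ^ 2 = (Lstar + delta) * (Lstar * (1 - r))).
  { transitivity (Lstar * ((Lstar + delta) * (1 - r))); [rewrite Hr1|]; ring. }
  assert ((Lstar + delta) * (Lstar * (1 - r)) <= (Lstar + delta) * volume t)
    by (apply Rmult_le_compat_l; lra).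
  apply Rmult_le_reg_r with (r := volume t); [lra|].
  unfold Rdiv. rewrite Rmult_assoc, Rinv_l by lra. lra.
Qed.

(* The quadratic inequality at lam = Lstar / W(t). *)
Lemma cost_over_volume_bound t : 0 < t -> 0 < volume t ->
  2 * (Lstar / volume t) * cost t <= gap t + Lstar ^ 2 / volume t.
Proof.
  intros Ht HW. pose proof (gap_quadratic t (Lstar / volume t) Ht).
  replace ((Lstar / volume t) ^ 2 * volume t) with (Lstar ^ 2 / volume t) in H
    by (field; lra).
  lra.
Qed.

(* Combined with A(t) >= Lstar: the gap is at least Lstar^2 / W(t). *)
Lemma gap_ge_lstar_sq_over_volume t : 0 < t -> 0 < volume t ->
  Lstar ^ 2 / volume t <= gap t.
Proof.
  intros Ht HW. pose proof (cost_over_volume_bound t Ht HW).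
  pose proof (cost_ge_Lstar t Ht). pose proof Lstar_pos.
  assert (Lstar / volume t * Lstar <= Lstar / volume t * cost t)
    by (apply Rmult_le_compat_l; [left; apply Rdiv_lt_0_compat|]; lra).
  replace (Lstar / volume t * Lstar) with (Lstar ^ 2 / volume t) in H2 by (field; lra).
  lra.
Qed.

(* The gap grows at most exponentially: by Thomson's principle at time t the
   energy of the old flow q(s) bounds gap t, and 1 / D_e(t) <= exp (t - s) / D_e(s). *)
Lemma gap_growth s t : 0 < s -> s <= t -> gap t <= exp (t - s) * gap s.
Proof.
  intros Hs Hst.
  assert (Hpos : forall u, 0 < u -> forall e, (e < m)%nat -> 0 < D e u)
    by (intros u Hu e He; apply diameter_pos; auto).
  pose proof (thomson_principle n m tl hd s0 s1 Hs0 Hs1 Hs01 Hends L (fun e => D e t)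
    (fun u => p u t) HL (Hpos t ltac:(lra)) (flow_unit t ltac:(lra)) (fun e => flow e s)
    (flow_unit s ltac:(lra))) as Hthomson.
  pose proof (electrical_energy n m tl hd s0 s1 Hs0 Hs1 Hs01 Hends L (fun e => D e s)
    (fun u => p u s) HL (Hpos s Hs) (flow_unit s ltac:(lra))) as Henergy.
  unfold gap. rewrite Henergy, <- rsum_scal.
  eapply Rle_trans; [exact Hthomson|]. apply rsum_le. intros e He.
  pose proof (diameter_decay_bound e s t He Hs Hst) as Hdecay.
  pose proof (Hpos s Hs e He). pose proof (Hpos t ltac:(lra) e He).
  pose proof (exp_pos (- (t - s))).
  assert (Hinv : / D e t <= exp (t - s) * / D e s).
  { assert (Hi : / D e t <= / (exp (- (t - s)) * D e s))
      by (apply Rinv_le_contravar; [apply Rmult_lt_0_compat|]; auto).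
    rewrite Rinv_mult, exp_Ropp, Rinv_inv in Hi. exact Hi. }
  assert (0 <= L e * flow e s ^ 2) by (apply Rmult_le_pos; [left; auto|apply pow2_ge_0]).
  unfold Rdiv. fold (flow e s).
  replace (exp (t - s) * (L e * flow e s ^ 2 * / D e s))
    with (L e * flow e s ^ 2 * (exp (t - s) * / D e s)) by ring.
  apply Rmult_le_compat_l; auto.
Qed.

Section ShortestPathLyapunov.

Variables (vs es : list nat).
Hypotheses (Hwalk : walk m tl hd vs es) (Hstart : hd_error vs = Some s0)
  (Hend : last vs s0 = s1) (Hlen : path_length L es = Lstar).

Definition lyapunov (t : R) : R :=
  path_length (fun e => L e * ln (D e t)) es - Lstar * ln (volume t).

Definition lyapunov_rate (t : R) : R :=
  path_length (fun e => L e * (/ D e t * (Rabs (flow e t) - D e t))) es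
  - Lstar * (/ volume t * (cost t - volume t)).

Lemma lyapunov_deriv t : 2 <= t -> derivable_pt_lim lyapunov t (lyapunov_rate t).
Proof.
  intros Ht. pose proof (walk_edges m tl hd vs es Hwalk) as Hes.
  apply (derivable_pt_lim_minus (fun s => path_length (fun e => L e * ln (D e s)) es)
           (fun s => Lstar * ln (volume s))).
  - apply (path_length_deriv es (fun e s => L e * ln (D e s))). intros e He.
    apply derivable_pt_lim_scal, derivable_pt_lim_ln_comp;
      [apply Hode|apply diameter_pos]; auto; lra.
  - apply derivable_pt_lim_scal, derivable_pt_lim_ln_comp; [apply volume_deriv; lra|].
    pose proof (volume_ge_half t Ht). pose proof Lstar_pos. lra.
Qed.

(* Along P, L_e |q_e| / D_e is the potential drop, whose sum is at least the
   gap; combined with the quadratic inequality this gives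
   Psi' >= (Delta - Lstar^2 / W) / 2 >= 0. *)
Lemma lyapunov_rate_lower t : 2 <= t -> (gap t - Lstar ^ 2 / volume t) / 2 <= lyapunov_rate t.
Proof.
  intros Ht. pose proof (volume_ge_half t Ht). pose proof Lstar_pos.
  pose proof (walk_edges m tl hd vs es Hwalk) as Hes.
  assert (Edrops : path_length (fun e => L e * (/ D e t * (Rabs (flow e t) - D e t))) es =
                   path_length (fun e => Rabs (p (tl e) t - p (hd e) t)) es - Lstar).
  { rewrite <- Hlen, <- path_length_minus. apply path_length_ext. intros e He.
    pose proof (HL e (Hes e He)). pose proof (diameter_pos e t (Hes e He) ltac:(lra)).
    unfold flow. rewrite current_eq, Rabs_mult by auto.
    rewrite (Rabs_pos_eq (D e t / L e)) by (left; apply Rdiv_lt_0_compat; auto).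
    field. lra. }
  pose proof (walk_telescope m tl hd (fun u => p u t) vs es Hwalk s0 s0 Hstart) as Htel.
  cbv beta in Htel. rewrite Hend in Htel.
  pose proof (RRle_abs (p s0 t - p s1 t)).
  pose proof (cost_over_volume_bound t ltac:(lra) ltac:(lra)).
  unfold lyapunov_rate. rewrite Edrops. unfold gap in *.
  replace (Lstar * (/ volume t * (cost t - volume t)))
    with (Lstar / volume t * cost t - Lstar) by (field; lra).
  lra.
Qed.

(* Psi' >= 0, as Delta >= Lstar^2 / W. *)
Lemma lyapunov_nondecreasing s t : 2 <= s -> s <= t -> lyapunov s <= lyapunov t.
Proof.
  intros Hs Hst. apply (nondecreasing_of_deriv_nonneg lyapunov lyapunov_rate); auto.
  - intros c Hc. apply lyapunov_deriv. lra.
  - intros c Hc. pose proof (lyapunov_rate_lower c ltac:(lra)).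
    pose proof (volume_ge_half c ltac:(lra)). pose proof Lstar_pos.
    pose proof (gap_ge_lstar_sq_over_volume c ltac:(lra) ltac:(lra)). lra.
Qed.

(* Psi is bounded above, since diameters are bounded and W >= Lstar / 2. *)
Lemma lyapunov_bounded t : 2 <= t ->
  lyapunov t <= path_length (fun e => L e * ln (Rmax 1 (D e 1))) es - Lstar * ln (Lstar / 2).
Proof.
  intros Ht. pose proof (walk_edges m tl hd vs es Hwalk) as Hes. pose proof Lstar_pos.
  assert (path_length (fun e => L e * ln (D e t)) es
          <= path_length (fun e => L e * ln (Rmax 1 (D e 1))) es).
  { apply path_length_le. intros e He.
    apply Rmult_le_compat_l; [left; auto|].
    apply ln_le_mono; [apply diameter_pos|apply diameter_bounded]; auto; lra. }
  assert (ln (Lstar / 2) <= ln (volume t)) by (apply ln_le_mono; [lra|apply volume_ge_half; auto]).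
  assert (Lstar * ln (Lstar / 2) <= Lstar * ln (volume t)) by (apply Rmult_le_compat_l; lra).
  unfold lyapunov. lra.
Qed.

(* Upper half of the convergence: a gap exceeding Lstar + ep at a late time t0
   would, by the bounded growth of the gap, keep Psi' >= ep / 4 on [t0 - h, t0],
   contradicting the convergence of the bounded nondecreasing Psi. *)
Lemma gap_eventually_below ep : 0 < ep ->
  exists T, 2 <= T /\ forall t, T <= t -> gap t < Lstar + ep.
Proof.
  intros Hep. pose proof Lstar_pos.
  set (h := ep / (4 * (Lstar + ep))).
  assert (Hh : 0 < h) by (apply Rdiv_lt_0_compat; lra).
  assert (Hh4 : h * (Lstar + ep) = ep / 4) by (unfold h; field; lra).
  assert (Hh1 : h < 1) by nra.
  destruct (lstar_sq_over_volume_eventually (ep / 4) ltac:(lra)) as [Ta [HTa HWa]].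
  destruct (bounded_nondecreasing_eventually_flat lyapunov 2 _ lyapunov_nondecreasing
              lyapunov_bounded (h * (ep / 4))) as [Tb [HTb Hflat]].
  { apply Rmult_lt_0_compat; lra. }
  exists (Rmax Ta Tb + h). pose proof (Rmax_l Ta Tb). pose proof (Rmax_r Ta Tb).
  split; [lra|]. intros t0 Ht0.
  apply Rnot_le_lt. intros Hbig.
  assert (Hrate : forall c, t0 - h <= c <= t0 -> ep / 4 <= lyapunov_rate c).
  { intros c Hc. pose proof (gap_growth c t0 ltac:(lra) ltac:(lra)) as Hgrow.
    pose proof (exp_pos (- (t0 - c))).
    assert (Hback : exp (- (t0 - c)) * gap t0 <= gap c).
    { apply Rmult_le_compat_l with (r := exp (- (t0 - c))) in Hgrow; [|lra].
      rewrite <- Rmult_assoc, <- exp_plus in Hgrow.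
      replace (- (t0 - c) + (t0 - c)) with 0 in Hgrow by ring.
      rewrite exp_0, Rmult_1_l in Hgrow. exact Hgrow. }
    assert (1 - h <= exp (- (t0 - c))).
    { assert (exp (- h) <= exp (- (t0 - c))) by (apply exp_le_mono; lra).
      pose proof (exp_ineq1_le (- h)). lra. }
    assert ((1 - h) * (Lstar + ep) <= exp (- (t0 - c)) * gap t0)
      by (apply Rmult_le_compat; lra).
    pose proof (lyapunov_rate_lower c ltac:(lra)).
    pose proof (HWa c ltac:(lra)). lra. }
  pose proof (increment_ge_of_deriv_ge lyapunov lyapunov_rate (ep / 4) (t0 - h) t0
    ltac:(lra) (fun c Hc => lyapunov_deriv c ltac:(lra)) Hrate) as Hincr.
  pose proof (Hflat (t0 - h) t0 ltac:(lra) ltac:(lra)).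
  replace (t0 - (t0 - h)) with h in Hincr by ring. lra.
Qed.

End ShortestPathLyapunov.

(* Once the gap stays below Lstar + ep, W' = A - W <= (Lstar + ep - W) / 2 by the
   quadratic inequality at lam = 1, so the volume eventually drops below
   Lstar + 2 ep. *)
Lemma volume_eventually_below ep : 0 < ep ->
  exists T, 2 <= T /\ forall t, T <= t -> volume t <= Lstar + 2 * ep.
Proof.
  intros Hep. pose proof Lstar_pos.
  destruct HLstar as [[vs [es [[Hw [_ [Hstart Hend]]] Hlen]]] _].
  destruct (gap_eventually_below vs es Hw Hstart Hend Hlen ep Hep) as [T1 [HT1 Hbelow]].
  pose proof (volume_ge_half T1 HT1) as HW1.
  destruct (exp_neg_eventually_le (ep / volume T1)) as [Tc Htc];
    [apply Rdiv_lt_0_compat; lra|].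
  exists (Rmax T1 (T1 + 2 * Tc)). pose proof (Rmax_l T1 (T1 + 2 * Tc)).
  pose proof (Rmax_r T1 (T1 + 2 * Tc)). split; [lra|]. intros t Ht.
  assert (Hdecay : volume t - (Lstar + ep)
                   <= exp (- (/ 2 * (t - T1))) * (volume T1 - (Lstar + ep))).
  { apply (linear_comparison_upper volume (fun c => cost c - volume c)); [lra|lra| |].
    - intros c Hc. apply volume_deriv. lra.
    - intros c Hc. pose proof (gap_quadratic c 1 ltac:(lra)).
      pose proof (Hbelow c ltac:(lra)). lra. }
  set (k := exp (- (/ 2 * (t - T1)))) in Hdecay.
  assert (Hk : k <= ep / volume T1) by (apply Htc; lra).
  assert (0 < k) by apply exp_pos.
  assert (k * (volume T1 - (Lstar + ep)) <= k * volume T1) by (apply Rmult_le_compat_l; lra).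
  assert (k * volume T1 <= ep / volume T1 * volume T1) by (apply Rmult_le_compat_r; lra).
  replace (ep / volume T1 * volume T1) with ep in * by (field; lra).
  lra.
Qed.

(* Lower half: with W(t) <= Lstar + 2 ep the gap is at least
   Lstar^2 / W(t) >= Lstar - 2 ep. *)
Lemma gap_converges eps : 0 < eps ->
  exists T, forall t, T <= t -> Rabs (gap t - Lstar) < eps.
Proof.
  intros Heps. pose proof Lstar_pos. set (ep := eps / 4).
  destruct HLstar as [[vs [es [[Hw [_ [Hstart Hend]]] Hlen]]] _].
  destruct (gap_eventually_below vs es Hw Hstart Hend Hlen ep ltac:(unfold ep; lra))
    as [T1 [HT1 Hbelow]].
  destruct (volume_eventually_below ep ltac:(unfold ep; lra)) as [T2 [HT2 Hvol]].
  exists (Rmax T1 T2). intros t Ht. pose proof (Rmax_l T1 T2). pose proof (Rmax_r T1 T2).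
  pose proof (Hbelow t ltac:(lra)). pose proof (Hvol t ltac:(lra)).
  pose proof (volume_ge_half t ltac:(lra)).
  pose proof (gap_ge_lstar_sq_over_volume t ltac:(lra) ltac:(lra)) as Habove.
  assert (Lstar - 2 * ep <= Lstar ^ 2 / volume t).
  { apply Rmult_le_reg_r with (r := volume t); [lra|].
    unfold Rdiv. rewrite Rmult_assoc, Rinv_l, Rmult_1_r by lra.
    destruct (Rle_dec 0 (Lstar - 2 * ep)).
    - assert ((Lstar - 2 * ep) * volume t <= (Lstar - 2 * ep) * (Lstar + 2 * ep))
        by (apply Rmult_le_compat_l; lra).
      nra.
    - assert (0 <= (2 * ep - Lstar) * volume t) by (apply Rmult_le_pos; lra). nra. }
  apply Rabs_def1; unfold ep in *; lra.
Qed.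

End PhysarumTrajectory.

Theorem mainTheorem6
  (n m : nat) (tl hd : nat -> nat) (s0 s1 : nat) (L : nat -> R)
  (D : nat -> R -> R) (p : nat -> R -> R)
  (Hgraph : connected_simple_graph n m tl hd s0 s1)
  (HL : forall e, (e < m)%nat -> 0 < L e)
  (HD0 : forall e, (e < m)%nat -> 0 < D e 0)
  (* potentials: solution of the Kirchhoff system, normalized p_{s1} = 0 *)
  (Hnorm : forall t, 0 <= t -> p s1 t = 0)
  (Hkirch : forall t, 0 <= t -> forall v, (v < n)%nat ->
     net_outflow m tl hd L (fun e => D e t) (fun u => p u t) v = supply s0 s1 v)
  (* Physarum dynamics on [0, +oo) *)
  (Hcont0 : forall e, (e < m)%nat -> forall eps, 0 < eps ->
     exists delta, 0 < delta /\
       forall t, 0 <= t < delta -> Rabs (D e t - D e 0) < eps)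
  (Hode : forall e, (e < m)%nat -> forall t, 0 < t ->
     derivable_pt_lim (D e) t
       (Rabs (current tl hd L (fun e' => D e' t) (fun u => p u t) e) - D e t))
  (Lstar : R)
  (HLstar : shortest_path_length m tl hd L s0 s1 Lstar) :
  forall eps, 0 < eps -> exists T, forall t, T <= t ->
    Rabs ((p s0 t - p s1 t) - Lstar) < eps.
Proof.
  destruct Hgraph as (Hs0 & Hs1 & Hs01 & Hedges & _ & _).
  apply (gap_converges n m tl hd s0 s1 L D p); auto.
  - intros e He. destruct (Hedges e He) as (Ht & Hh & _). split; assumption.
  - intros e He. apply (Hedges e He).
Qed.
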